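(* Let $\mathcal B=(B_1,\dots,B_d)$ be a splitting of order $d$ of $B_J\in\mathbb R^{n\times n}$. Then: if $\|B_J\|_\infty\le1$, then $\|T(\mathcal B)\|_\infty=\|B_J\|_\infty$; if $\|B_J\|_\infty>1$, then $\|B_J\|_\infty\le\|T(\mathcal B)\|_\infty\le\|B_J\|_\infty^d$.
   Context: For $B\in\mathbb R^{n\times n}$, a splitting of $B$ of order $d\ge1$ is an ordered $d$-tuple $\mathcal B=(B_1,\dots,B_d)$ of real $n\times n$ matrices with $B_p\neq O$ for all $p$, $\sum_{p=1}^d B_p=B$, and $B_p\circ B_q=O$ (Hadamard product) for $p\ne q$. The iteration matrix of $\mathcal B$ is the $dn\times dn$ matrix $T(\mathcal B)=(I_{dn}-\mathcal L)^{-1}\mathcal U$, where $\mathcal L,\mathcal U$ are $d\times d$ block matrices with $n\times n$ blocks, $\mathcal L_{ij}=B_j$ if $i>j$ and $O$ otherwise, $\mathcal U_{ij}=B_j$ if $i\le j$ and $O$ otherwise. $\|\cdot\|_\infty$ is the maximum-row-sum matrix norm. *)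

From HB Require Import structures.
From mathcomp Require Import all_boot all_order all_algebra.
Set Implicit Arguments. Unset Strict Implicit. Unset Printing Implicit Defensive.
Import Order.TTheory GRing.Theory Num.Theory.
Local Open Scope ring_scope.

Lemma blk_proof d n (k : 'I_(d * n)) : (k %/ n < d)%N.
Proof.
case: n k => [|n] k; first by case: k => m; rewrite muln0.
by rewrite ltn_divLR // ltn_ord.
Qed.

Lemma off_proof d n (k : 'I_(d * n)) : (k %% n < n)%N.
Proof.
case: n k => [|n] k; first by case: k => m; rewrite muln0.
by rewrite ltn_pmod.
Qed.

Definition blk d n (k : 'I_(d * n)) : 'I_d := Ordinal (blk_proof k).
Definition off d n (k : 'I_(d * n)) : 'I_n := Ordinal (off_proof k).

Definition is_splitting (R : ringType) (n d : nat) (B : 'I_d -> 'M[R]_n)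
    (BJ : 'M[R]_n) : Prop :=
  (0 < d)%N /\
  (forall p, B p != 0) /\
  \sum_(p < d) B p = BJ /\
  (forall p q : 'I_d, p != q -> forall i j, B p i j * B q i j = 0).

Definition blockL (R : ringType) (n d : nat) (B : 'I_d -> 'M[R]_n) : 'M[R]_(d * n) :=
  \matrix_(i, j) if (blk j < blk i)%N then B (blk j) (off i) (off j) else 0.

Definition blockU (R : ringType) (n d : nat) (B : 'I_d -> 'M[R]_n) : 'M[R]_(d * n) :=
  \matrix_(i, j) if (blk i <= blk j)%N then B (blk j) (off i) (off j) else 0.

Definition iterT (R : comUnitRingType) (n d : nat) (B : 'I_d -> 'M[R]_n) : 'M[R]_(d * n) :=
  invmx (1%:M - blockL B) *m blockU B.

Definition norm_inf (R : numDomainType) (m : nat) (A : 'M[R]_m) : R :=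
  \big[Num.max/0]_(i < m) \sum_(j < m) `|A i j|.

From mathcomp Require Import all_boot all_order all_algebra.
Import Order.TTheory GRing.Theory Num.Theory.
Local Open Scope ring_scope.
Set Implicit Arguments. Unset Strict Implicit.

(* Write b = ||B_J||, L and U for the block matrices, T = T(B).  Since L is
   strictly block lower triangular it is nilpotent, so I - L is invertible and
   T = U + L T.  The entries of U and L in a row of block row p are taken from
   the B_q with q >= p and q < p respectively; as the B_q have disjoint
   supports, the absolute values of that row of [U | L] add up to the absolute
   row sum of B_J.  By induction on p, every row of block row p of T then has
   absolute sum at most max(1, b)^p b, which gives the upper bounds.  Block row
   0 of L vanishes, so block row 0 of T is (B_1 ... B_d), whose absolute row
   sums are those of B_J: this gives ||T|| >= b. *)

Section BlockIndex.
Variables n d : nat.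

Lemma bidx_proof (p : 'I_d) (c : 'I_n) : (p * n + c < d * n)%N.
Proof.
apply: (@leq_trans (p * n + n)); first by rewrite ltn_add2l.
by rewrite -mulSnr leq_mul2r ltn_ord orbT.
Qed.

Definition bidx (p : 'I_d) (c : 'I_n) : 'I_(d * n) := Ordinal (bidx_proof p c).

Lemma blk_bidx p c : blk (bidx p c) = p.
Proof.
by apply: val_inj; rewrite /= divnMDl ?divn_small ?addn0 // (leq_ltn_trans _ (ltn_ord c)).
Qed.

Lemma off_bidx p c : off (bidx p c) = c.
Proof. by apply: val_inj; rewrite /= modnMDl modn_small. Qed.

Lemma bidx_blk_off k : bidx (blk k) (off k) = k.
Proof. by apply: val_inj; rewrite /= -divn_eq. Qed.

Lemma big_bidx (T : Type) (idx : T) (op : Monoid.com_law idx)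
    (F : 'I_(d * n) -> T) :
  \big[op/idx]_k F k = \big[op/idx]_(p < d) \big[op/idx]_(c < n) F (bidx p c).
Proof.
rewrite pair_big (reindex (fun pc : 'I_d * 'I_n => bidx pc.1 pc.2)) //=.
exists (fun k => (blk k, off k)) => [[p c] _ | k _] /=.
  by rewrite blk_bidx off_bidx.
by rewrite bidx_blk_off.
Qed.

End BlockIndex.

Lemma normr_sum_disjoint (R : numDomainType) (I : finType) (F : I -> R) :
  (forall p q, p != q -> F p * F q = 0) -> `|\sum_i F i| = \sum_i `|F i|.
Proof.
move=> disjF; have [p Fp_neq0 | F_eq0] := pickP (fun p => F p != 0); last first.
  by rewrite !big1 ?normr0 // => p _; move/negbFE/eqP: (F_eq0 p) => ->; rewrite ?normr0.
have Fq_eq0 q : q != p -> F q = 0.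
  by move=> /disjF/eqP; rewrite mulf_eq0 (negbTE Fp_neq0) orbF => /eqP.
rewrite (bigD1 p) // [RHS](bigD1 p) //= !big1 ?addr0 // => q /Fq_eq0 ->.
by rewrite normr0.
Qed.

Section NormInf.
Variables (R : realDomainType) (m : nat).

Lemma norm_inf_ge0 (A : 'M[R]_m) : 0 <= norm_inf A.
Proof.
rewrite /norm_inf; elim/big_ind: _ => // [x y x_ge0 _ | i].
  by rewrite le_max x_ge0.
by rewrite sumr_ge0.
Qed.

Lemma row_sum_le_norm_inf (A : 'M[R]_m) i : \sum_j `|A i j| <= norm_inf A.
Proof. exact: (le_bigmax _ (fun i => \sum_j `|A i j|)). Qed.

Lemma norm_inf_le (A : 'M[R]_m) M :
  0 <= M -> (forall i, \sum_j `|A i j| <= M) -> norm_inf A <= M.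
Proof. by move=> M_ge0 le_rows; apply: bigmax_le. Qed.

Lemma row_sum_fixpoint_le (T U L : 'M[R]_m) i : T = U + L *m T ->
  \sum_j `|T i j| <= \sum_k (`|U i k| + `|L i k| * \sum_j `|T k j|).
Proof.
move=> defT; rewrite big_split /=.
under [X in _ <= _ + X]eq_bigr do rewrite mulr_sumr.
rewrite [X in _ <= _ + X]exchange_big -big_split /=.
apply: ler_sum => j _; rewrite {1}defT !mxE.
apply: le_trans (ler_normD _ _) _; rewrite lerD2l.
by apply: le_trans (ler_norm_sum _ _ _) _; apply: ler_sum => k _; rewrite normrM.
Qed.

End NormInf.

Section BlockMatrices.
Variables (n d : nat).

Lemma blockU_bidx (R : ringType) (B : 'I_d -> 'M[R]_n) k p c :
  blockU B k (bidx p c) = if (blk k <= p)%N then B p (off k) c else 0.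
Proof. by rewrite mxE blk_bidx off_bidx. Qed.

Lemma blockL_bidx (R : ringType) (B : 'I_d -> 'M[R]_n) k p c :
  blockL B k (bidx p c) = if (p < blk k)%N then B p (off k) c else 0.
Proof. by rewrite mxE blk_bidx off_bidx. Qed.

Lemma blockL_expr_eq0 (R : ringType) (B : 'I_d -> 'M[R]_n) t i j :
  (blk i < blk j + t)%N -> (blockL B ^+ t) i j = 0.
Proof.
elim: t i j => [|t IHt] i j lt_ij.
  by rewrite expr0 mxE; case: eqP => // eq_ij; rewrite eq_ij addn0 ltnn in lt_ij.
rewrite exprSr mxE big1 // => k _; rewrite [blockL B k j]mxE.
case: ltnP => lt_jk; last by rewrite mulr0.
by rewrite IHt ?mul0r // (leq_trans lt_ij) // -addSnnS leq_add2r.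
Qed.

Lemma blockL_nilpotent (R : ringType) (B : 'I_d -> 'M[R]_n) : blockL B ^+ d = 0.
Proof.
by apply/matrixP => i j; rewrite mxE blockL_expr_eq0 // ltn_addl.
Qed.

Lemma unitmx_1_blockL (R : comUnitRingType) (B : 'I_d -> 'M[R]_n) :
  1%:M - blockL B \in unitmx.
Proof.
have geom : (1%:M - blockL B) *m \sum_(i < d) blockL B ^+ i = 1%:M.
  have := subrX1 (blockL B) d; rewrite blockL_nilpotent sub0r -opprB => /eqP.
  by rewrite eqr_oppLR mulNr opprK => /eqP.
by case/mulmx1_unit: geom.
Qed.

Lemma iterT_fixpoint (R : comUnitRingType) (B : 'I_d -> 'M[R]_n) :
  iterT B = blockU B + blockL B *m iterT B.
Proof.
have : (1%:M - blockL B) *m iterT B = blockU B.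
  by rewrite /iterT mulKVmx // unitmx_1_blockL.
by move=> <-; rewrite mulmxBl mul1mx subrK.
Qed.

End BlockMatrices.

Section Splitting.
Variables (R : realFieldType) (n d : nat) (B : 'I_d -> 'M[R]_n) (BJ : 'M[R]_n).
Hypothesis sumB : \sum_(p < d) B p = BJ.
Hypothesis disjB : forall p q : 'I_d, p != q -> forall i j, B p i j * B q i j = 0.

Lemma sum_abs_splitting i j : \sum_p `|B p i j| = `|BJ i j|.
Proof.
rewrite -sumB summxE normr_sum_disjoint // => p q neq_pq; exact: disjB.
Qed.

Lemma row_sum_iterT_le (c : R) k :
  1 <= c -> norm_inf BJ <= c ->
  \sum_l `|iterT B k l| <= c ^+ blk k * norm_inf BJ.
Proof.
move=> c_ge1 bc; have c_ge0 : 0 <= c := le_trans ler01 c_ge1.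
move blk_k: (blk k : nat) => p; elim/ltn_ind: p k blk_k => p IHp k blk_k.
apply: le_trans (row_sum_fixpoint_le k (iterT_fixpoint B)) _.
rewrite (big_bidx _ (fun m => _ + _ * _)).
apply: (@le_trans _ _ (\sum_q \sum_c' c ^+ p * `|B q (off k) c'|)).
  apply: ler_sum => q _; apply: ler_sum => c' _.
  rewrite blockU_bidx blockL_bidx blk_k; case: leqP => lt_qp.
    by rewrite normr0 mul0r addr0 ler_peMl // exprn_ege1.
  rewrite normr0 add0r mulrC ler_wpM2r //.
  apply: le_trans (IHp _ lt_qp _ (congr1 val (blk_bidx _ _))) _.
  rewrite -(subnKC lt_qp) exprD exprSr -mulrA ler_wpM2l ?exprn_ge0 //.
  by rewrite (le_trans bc) // ler_peMr // exprn_ege1.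
under eq_bigr do rewrite -mulr_sumr.
rewrite -mulr_sumr exchange_big /= ler_wpM2l ?exprn_ge0 //.
under eq_bigr do rewrite sum_abs_splitting.
exact: row_sum_le_norm_inf.
Qed.

Lemma norm_inf_iterT_ge : (0 < d)%N -> norm_inf BJ <= norm_inf (iterT B).
Proof.
move=> d_gt0; apply: norm_inf_le => [|r]; first exact: norm_inf_ge0.
pose p0 : 'I_d := Ordinal d_gt0.
apply: le_trans (row_sum_le_norm_inf _ (bidx p0 r)).
rewrite (big_bidx _ (fun l => `|_|)) exchange_big /=.
apply: ler_sum => c _; rewrite -sum_abs_splitting; apply: ler_sum => p _.
rewrite iterT_fixpoint !mxE big1 ?addr0 ?blk_bidx ?off_bidx // => m _.
by rewrite mxE blk_bidx mul0r.
Qed.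

Lemma norm_inf_iterT_le (c : R) : (0 < d)%N -> 1 <= c -> norm_inf BJ <= c ->
  norm_inf (iterT B) <= c ^+ d.-1 * norm_inf BJ.
Proof.
move=> d_gt0 c_ge1 bc; have b_ge0 := norm_inf_ge0 BJ.
apply: norm_inf_le => [|k].
  by rewrite mulr_ge0 // exprn_ge0 // (le_trans ler01 c_ge1).
apply: le_trans (row_sum_iterT_le k c_ge1 bc) _.
by rewrite ler_wpM2r // ler_weXn2l // -ltnS prednK.
Qed.

End Splitting.

Theorem proposition4p1 (R : realFieldType) (n d : nat)
    (B : 'I_d -> 'M[R]_n) (BJ : 'M[R]_n) :
  is_splitting B BJ ->
  (norm_inf BJ <= 1 -> norm_inf (iterT B) = norm_inf BJ) /\
  (1 < norm_inf BJ ->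
     norm_inf BJ <= norm_inf (iterT B) /\ norm_inf (iterT B) <= norm_inf BJ ^+ d).
Proof.
case=> d_gt0 [_ [sumB disjB]].
have lower := norm_inf_iterT_ge sumB disjB d_gt0.
have upper := norm_inf_iterT_le sumB disjB d_gt0.
split=> [b_le1 | b_gt1].
  by apply/eqP; rewrite eq_le lower andbT -[X in _ <= X]mul1r -(expr1n _ d.-1) upper.
by split=> //; have := upper _ (ltW b_gt1) (lexx _); rewrite -exprSr prednK.
Qed.
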